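(* Let $p \geq 2$ be a real number (the computational budget). Let $c_{a,1}>0$ and $c_{c,1}>0$ be constants, let $r_{a,1}:(0,\infty)\to(0,\infty)$ be a positive, decreasing, at least twice continuously differentiable function, and let $r_{c,1}:(0,\infty)\to(0,\infty)$ be a positive, increasing, at least twice continuously differentiable function. Define $$u_1:[1,p-1]\to(0,\infty),\qquad u_1(n_1)=\frac{1}{p-n_1}\Big(c_{a,1}\,r_{a,1}(n_1)+c_{c,1}\,r_{c,1}(n_1)\Big).$$ Assume that $$c_{a,1}\,r_{a,1}''(n_1)+c_{c,1}\,r_{c,1}''(n_1)>0 \quad\text{for all } n_1\in[1,p-1].$$ Then $u_1$ has a unique global minimum $n_1^*\in[1,p-1]$.
   Context: The functions $r_{a,1}$ and $r_{c,1}$ model, respectively, an accuracy rate and an evaluation-cost rate of a low-fidelity model trained with $n_1$ high-fidelity samples: for a high-fidelity model output with Pearson correlation $\rho_1(n_1)$ to the low-fidelity output and low-fidelity evaluation cost $w_1(n_1)$ (high-fidelity cost normalized to $1$), one has $1-\rho_1^2(n_1)\le c_{a,1}r_{a,1}(n_1)$ and $w_1(n_1)\le c_{c,1}r_{c,1}(n_1)$. These bounds are not needed for the statement, which concerns only $u_1$. *)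

From Stdlib Require Import Reals.
From Coquelicot Require Import Coquelicot.
Open Scope R_scope.

Definition C2_pos (f : R -> R) : Prop :=
  forall x, 0 < x ->
    ex_derive f x /\ ex_derive (Derive f) x /\
    continuous (Derive f) x /\ continuous (Derive (Derive f)) x.

(* The objective u_1 (only meaningful on [1, p-1]). *)
Definition u1 (p ca cc : R) (ra rc : R -> R) (n : R) : R :=
  / (p - n) * (ca * ra n + cc * rc n).

(** The objective is [F / (p - n)] with [F = ca ra + cc rc] convex on [[1, p-1]].
    Its derivative is [N / (p - n)^2] with [N n = F' n (p - n) + F n], and
    [N' n = F'' n (p - n) > 0], so the derivative changes sign at most once, from
    negative to positive.  Hence two distinct minimisers [x < y] are impossible:
    the mean value theorem gives a critical point [c] in between, and a point of
    [(x, c)] where the derivative is nonnegative, contradicting the single sign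
    change.  Existence is the extreme value theorem. *)

From Stdlib Require Import Reals Lra.
From Coquelicot Require Import Coquelicot.
Open Scope R_scope.

Definition is_min_on (h : R -> R) (a b x : R) : Prop :=
  a <= x <= b /\ forall y, a <= y <= b -> h x <= h y.

Lemma MVT_is_derive (h dh : R -> R) (a b : R) :
  a < b -> (forall x, a <= x <= b -> is_derive h x (dh x)) ->
  exists c, h b - h a = dh c * (b - a) /\ a < c < b.
Proof.
  intros hab hd. apply MVT_cor2; [exact hab |].
  intros c hc. apply is_derive_Reals, hd, hc.
Qed.

Lemma strict_increasing_of_derive_pos (h dh : R -> R) (a b : R) :
  (forall x, a <= x <= b -> is_derive h x (dh x)) ->
  (forall x, a <= x <= b -> 0 < dh x) ->
  forall x y, a <= x -> x < y -> y <= b -> h x < h y.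
Proof.
  intros hd hpos x y hx hxy hy.
  destruct (MVT_is_derive h dh x y hxy) as [c [Hc Hcxy]].
  { intros z hz. apply hd. lra. }
  assert (0 < dh c * (y - x)) by (apply Rmult_lt_0_compat; [apply hpos |]; lra).
  lra.
Qed.

Section SingleCrossing.

Variables (h dh : R -> R) (a b : R).
Hypothesis h_derive : forall x, a <= x <= b -> is_derive h x (dh x).
Hypothesis dh_single_crossing :
  forall x y, a <= x -> x < y -> y <= b -> 0 <= dh x -> 0 < dh y.

Lemma exists_is_min_on : a <= b -> exists x, is_min_on h a b x.
Proof.
  intros hab. destruct (continuity_ab_min h a b hab) as [x [Hmin Hx]].
  - intros c hc. apply derivable_continuous_pt.
    exists (dh c). apply is_derive_Reals, h_derive, hc.
  - exists x. split; assumption.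
Qed.

Lemma is_min_on_lt_False x y :
  is_min_on h a b x -> is_min_on h a b y -> x < y -> False.
Proof.
  intros [Hx Hxmin] [Hy Hymin] hxy.
  assert (Hhxy : h x = h y) by (apply Rle_antisym; [apply Hxmin | apply Hymin]; lra).
  destruct (MVT_is_derive h dh x y hxy) as [c [Hc Hcxy]].
  { intros z hz. apply h_derive. lra. }
  assert (Hcrit : dh c = 0).
  { apply (Rmult_eq_reg_r (y - x)); lra. }
  destruct (MVT_is_derive h dh x c (proj1 Hcxy)) as [d [Hd Hdxc]].
  { intros z hz. apply h_derive. lra. }
  assert (Hdnonneg : 0 <= dh d).
  { assert (h x <= h c) by (apply Hxmin; lra).
    destruct (Rle_or_lt 0 (dh d)) as [| Hneg]; [assumption |].
    assert (dh d * (c - x) < 0) by (apply Rmult_neg_pos; lra). lra. }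
  assert (0 < dh c) by (apply (dh_single_crossing d); lra).
  lra.
Qed.

Lemma unique_is_min_on :
  a <= b -> exists x, is_min_on h a b x /\ forall y, is_min_on h a b y -> y = x.
Proof.
  intros hab. destruct (exists_is_min_on hab) as [x Hx].
  exists x. split; [exact Hx |]. intros y Hy.
  destruct (Rtotal_order y x) as [Hlt | [Heq | Hgt]]; [| exact Heq |]; exfalso.
  - exact (is_min_on_lt_False y x Hy Hx Hlt).
  - exact (is_min_on_lt_False x y Hx Hy Hgt).
Qed.

End SingleCrossing.

Lemma is_derive_div_sub (F : R -> R) (p x dF : R) :
  x <> p -> is_derive F x dF ->
  is_derive (fun y => / (p - y) * F y) x ((dF * (p - x) + F x) / (p - x) ^ 2).
Proof.
  intros hx hF.
  assert (Hinv : is_derive (fun y => / (p - y)) x (- (0 - 1) / (p - x) ^ 2)).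
  { apply (is_derive_inv (fun y => p - y)); [| lra].
    auto_derive; [exact I | ring]. }
  replace ((dF * (p - x) + F x) / (p - x) ^ 2)
    with (- (0 - 1) / (p - x) ^ 2 * F x + / (p - x) * dF)
    by (field; lra).
  apply (is_derive_mult (fun y => / (p - y)) F); [exact Hinv | exact hF |].
  intros; apply Rmult_comm.
Qed.

Section ConvexOverRemaining.

Variables (p a b : R) (F dF d2F : R -> R).
Hypothesis hab : a <= b.
Hypothesis hbp : b < p.
Hypothesis F_derive : forall x, a <= x <= b -> is_derive F x (dF x).
Hypothesis dF_derive : forall x, a <= x <= b -> is_derive dF x (d2F x).
Hypothesis d2F_pos : forall x, a <= x <= b -> 0 < d2F x.

Let N (x : R) : R := dF x * (p - x) + F x.

Lemma is_derive_numerator x : a <= x <= b -> is_derive N x (d2F x * (p - x)).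
Proof.
  intros hx. unfold N.
  replace (d2F x * (p - x)) with (d2F x * (p - x) + dF x * (0 - 1) + dF x) by ring.
  apply (is_derive_plus (fun y => dF y * (p - y)) F); [| apply F_derive, hx].
  apply (is_derive_mult dF (fun y => p - y)); [apply dF_derive, hx | |].
  - auto_derive; [exact I | ring].
  - intros; apply Rmult_comm.
Qed.

Lemma unique_min_div_sub :
  exists x, is_min_on (fun y => / (p - y) * F y) a b x /\
    forall y, is_min_on (fun y => / (p - y) * F y) a b y -> y = x.
Proof.
  apply (unique_is_min_on _ (fun x => N x / (p - x) ^ 2)); [| | exact hab].
  - intros x hx. apply is_derive_div_sub; [lra | apply F_derive, hx].
  - assert (HN : forall x y, a <= x -> x < y -> y <= b -> N x < N y).
    { apply (strict_increasing_of_derive_pos N (fun x => d2F x * (p - x))).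
      - exact is_derive_numerator.
      - intros x hx. apply Rmult_lt_0_compat; [apply d2F_pos, hx | lra]. }
    intros x y hx hxy hy Hx.
    assert (0 < (p - x) ^ 2) by (apply pow_lt; lra).
    assert (0 < (p - y) ^ 2) by (apply pow_lt; lra).
    assert (0 <= N x).
    { replace (N x) with (N x / (p - x) ^ 2 * (p - x) ^ 2) by (field; lra).
      apply Rmult_le_pos; lra. }
    apply Rdiv_lt_0_compat; [| assumption].
    specialize (HN x y hx hxy hy). lra.
Qed.

End ConvexOverRemaining.

Lemma C2_pos_is_derive (f : R -> R) x :
  C2_pos f -> 0 < x ->
  is_derive f x (Derive f x) /\ is_derive (Derive f) x (Derive (Derive f) x).
Proof.
  intros hf hx. destruct (hf x hx) as [d1 [d2 _]].
  split; apply Derive_correct; assumption.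
Qed.

Lemma is_derive_lin_comb (f g : R -> R) (ca cc x df dg : R) :
  is_derive f x df -> is_derive g x dg ->
  is_derive (fun y => ca * f y + cc * g y) x (ca * df + cc * dg).
Proof.
  intros hf hg.
  apply (is_derive_plus (fun y => ca * f y) (fun y => cc * g y));
    apply is_derive_scal; assumption.
Qed.

Theorem proposition1 (p ca cc : R) (ra rc : R -> R)
  (hp : 2 <= p) (hca : 0 < ca) (hcc : 0 < cc)
  (ra_pos : forall x, 0 < x -> 0 < ra x)
  (ra_dec : forall x y, 0 < x -> x <= y -> ra y <= ra x)
  (ra_C2 : C2_pos ra)
  (rc_pos : forall x, 0 < x -> 0 < rc x)
  (rc_inc : forall x y, 0 < x -> x <= y -> rc x <= rc y)
  (rc_C2 : C2_pos rc)
  (hconv : forall n, 1 <= n <= p - 1 ->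
     0 < ca * Derive (Derive ra) n + cc * Derive (Derive rc) n) :
  exists nstar, (1 <= nstar <= p - 1) /\
    (forall n, 1 <= n <= p - 1 -> u1 p ca cc ra rc nstar <= u1 p ca cc ra rc n) /\
    (forall m, 1 <= m <= p - 1 ->
       (forall n, 1 <= n <= p - 1 -> u1 p ca cc ra rc m <= u1 p ca cc ra rc n) ->
       m = nstar).
Proof.
  destruct (unique_min_div_sub p 1 (p - 1)
              (fun x => ca * ra x + cc * rc x)
              (fun x => ca * Derive ra x + cc * Derive rc x)
              (fun x => ca * Derive (Derive ra) x + cc * Derive (Derive rc) x))
    as [nstar [[Hrange Hmin] Huniq]]; try lra.
  - intros x hx.
    destruct (C2_pos_is_derive ra x ra_C2) as [Hra _]; [lra |].
    destruct (C2_pos_is_derive rc x rc_C2) as [Hrc _]; [lra |].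
    exact (is_derive_lin_comb ra rc ca cc x _ _ Hra Hrc).
  - intros x hx.
    destruct (C2_pos_is_derive ra x ra_C2) as [_ Hra]; [lra |].
    destruct (C2_pos_is_derive rc x rc_C2) as [_ Hrc]; [lra |].
    exact (is_derive_lin_comb _ _ ca cc x _ _ Hra Hrc).
  - exact hconv.
  - exists nstar. split; [exact Hrange |]. split; [exact Hmin |].
    intros m Hm Hmmin. apply Huniq. split; assumption.
Qed.
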